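(* Let $G,H$ be profinite groups and $\varphi:G\to H$ an abstract group isomorphism (not assumed continuous). If $P$ is a $p$-Sylow subgroup of $G$ for a prime $p$, then $\varphi(P)$ is a $p$-Sylow subgroup of $H$.
   Context: A $p$-Sylow subgroup of a profinite group is a maximal closed pro-$p$ subgroup. *)

From HB Require Import structures.
From mathcomp Require Import all_boot monoid.
From mathcomp Require Import boolp classical_sets topology.

Set Implicit Arguments.
Unset Strict Implicit.
Unset Printing Implicit Defensive.

Local Open Scope classical_set_scope.
Local Open Scope group_scope.

(* A carrier that is both an (abstract, possibly infinite) group and a
   topological space; no compatibility is required here (see below). *)
HB.structure Definition TopGroup := {G of Group G & Topological G}.
Notation topGroupType := TopGroup.type.

Definition topological_group (G : topGroupType) : Prop :=
  continuous (fun xy : G * G => xy.1 * xy.2) /\ continuous (fun x : G => x^-1).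

Definition profinite (G : topGroupType) : Prop :=
  [/\ topological_group G, hausdorff_space G, compact [set: G]
    & totally_disconnected [set: G]].

Definition is_subgroup (G : topGroupType) (H : set G) : Prop :=
  [/\ H 1, (forall x y, H x -> H y -> H (x * y)) & (forall x, H x -> H x^-1)].

Definition rel_open (G : topGroupType) (P N : set G) : Prop :=
  exists U : set G, open U /\ N = P `&` U.

Definition normal_in (G : topGroupType) (N P : set G) : Prop :=
  forall x n, P x -> N n -> N (x^-1 * n * x).

(* The index [P : N] equals k: there are k elements of P, pairwise in
   distinct left cosets of N, whose left N-cosets cover P. *)
Definition index_eq (G : topGroupType) (P N : set G) (k : nat) : Prop :=
  exists s : seq G,
  [/\ size s = k,
      (forall i, (i < k)%N -> P (nth 1 s i)),
      (forall x, P x -> exists2 i, (i < k)%N & N ((nth 1 s i)^-1 * x))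
    & (forall i j, (i < k)%N -> (j < k)%N ->
                   N ((nth 1 s i)^-1 * nth 1 s j) -> i = j)].

(* P is a closed pro-p subgroup of G: a closed subgroup (hence profinite in
   the subspace topology when G is) all of whose quotients by open normal
   subgroups are finite p-groups, i.e. have index a power of p. *)
Definition pro_p_subgroup (p : nat) (G : topGroupType) (P : set G) : Prop :=
  [/\ is_subgroup P, closed P &
      forall N : set G, is_subgroup N -> N `<=` P -> normal_in N P ->
        rel_open P N -> exists k : nat, index_eq P N (p ^ k)].

Definition p_Sylow (p : nat) (G : topGroupType) (P : set G) : Prop :=
  pro_p_subgroup p P /\
  forall Q : set G, pro_p_subgroup p Q -> P `<=` Q -> Q = P.

(* A closed subgroup S of a profinite group is pro-p iff it is
   p'-divisible: every element of S has a q-th root in S for every prime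
   q <> p.  If S is pro-p, the q-th power map is bijective on each finite
   p-group S/N, so every x in S is a q-th power modulo every open normal N;
   as the set of q-th powers of S is compact, x is a q-th power.  Conversely,
   if S is p'-divisible then so is each finite quotient S/N, whose q-th power
   map is therefore onto, hence injective, so that S/N has no element of
   order q and, by Cauchy's theorem, is a p-group.  Since the closure of a
   p'-divisible subgroup is again p'-divisible, the p-Sylow subgroups are
   exactly the maximal p'-divisible subgroups, a purely algebraic notion that
   any abstract group isomorphism preserves. *)

From HB Require Import structures.
From mathcomp Require Import all_boot monoid.
From mathcomp Require Import boolp classical_sets topology.
From mathcomp Require Import finmap.
From mathcomp Require Import fingroup perm cyclic pgroup.

Set Implicit Arguments.
Unset Strict Implicit.
Unset Printing Implicit Defensive.

Local Open Scope classical_set_scope.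
Local Open Scope group_scope.

(* [compact_cover] is stated for pointed spaces; a group is pointed by 1. *)
Definition pointed_group (G : topGroupType) : Type := G.
HB.instance Definition _ (G : topGroupType) := TopGroup.on (pointed_group G).
HB.instance Definition _ (G : topGroupType) :=
  isPointed.Build (pointed_group G) 1.

Lemma bigcap_fset_ind (T : Type) (I : choiceType) (P : set T -> Prop)
    (F : I -> set T) (X : {fset I}) :
  P setT -> (forall A B, P A -> P B -> P (A `&` B)) ->
  (forall i, i \in X -> P (F i)) -> P (\bigcap_(i in [set` X]) F i).
Proof. by move=> PT PI PF; rewrite bigcap_fset big_seq; exact: big_ind. Qed.

Lemma compact_tube (X : ptopologicalType) (Y Z : topologicalType)
    (K : set X) (y : Y) (f : X -> Y -> Z) (U : set Z) :
  compact K -> open U -> (forall k, K k -> U (f k y)) ->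
  (forall k, K k -> forall W, nbhs (f k y) W -> exists A B,
     [/\ nbhs k A, nbhs y B & forall a b, A a -> B b -> W (f a b)]) ->
  exists2 B, nbhs y B & forall k b, K k -> B b -> U (f k b).
Proof.
move=> cK oU UK fK.
have AB k : {AB : set X * set Y | K k -> [/\ nbhs k AB.1, nbhs y AB.2
    & forall a b, AB.1 a -> AB.2 b -> U (f a b)]}.
  apply: cid; have [Kk|nKk] := pselect (K k); last by exists (setT, setT) => /nKk.
  have [A [B hAB]] := fK k Kk U (open_nbhs_nbhs (conj oU (UK k Kk))).
  by exists (A, B).
rewrite compact_cover in cK.
case: (cK X K (fun k => (sval (AB k)).1°)) => [k _|k Kk|D DK KD].
- exact: open_interior.
- by exists k => //; have [] := svalP (AB k) Kk.
exists (\bigcap_(k in [set` D]) (sval (AB k)).2).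
  by apply: filter_bigI => k /DK/set_mem Kk; have [] := svalP (AB k) Kk.
move=> k b Kk Bb; have [i Di Aik] := KD k Kk.
have [_ _ ABU] := svalP (AB i) (set_mem (DK i Di)).
exact: ABU (interior_subset Aik) (Bb i Di).
Qed.

Lemma closed_open_separation (T : topologicalType) (A1 A2 : set T) :
  hausdorff_space T -> compact [set: T] -> closed A1 -> closed A2 ->
  A1 `&` A2 = set0 -> exists U, [/\ open U, A1 `<=` U & closure U `&` A2 = set0].
Proof.
move=> hT cT cA1 cA2 A12; have : set_nbhs A1 (~` A2).
  apply/set_nbhsP; exists (~` A2); split => //; first exact: closed_openC.
  by move=> z A1z A2z; have : (A1 `&` A2) z by []; rewrite A12.
move=> /(compact_normal hT cT cA1) [V /set_nbhsP [U [oU A1U UV]] clVA2].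
exists U; split => //; apply/seteqP; split => // z [/(closureS UV)/clVA2].
by move=> /[apply].
Qed.

Definition quasi_component (T : topologicalType) (x : T) :=
  \bigcap_(C in [set C : set T | clopen C /\ C x]) C.

Section QuasiComponent.
Variables (T : ptopologicalType) (x : T).
Hypotheses (hT : hausdorff_space T) (cT : compact [set: T]).
Local Notation Z := (quasi_component x).

Lemma quasi_component_refl : Z x. Proof. by move=> C []. Qed.

Lemma closed_quasi_component : closed Z.
Proof. by apply: closed_bigI => C [[]]. Qed.

Lemma quasi_component_sub (A1 A2 : set T) : closed A1 -> closed A2 ->
  A1 `&` A2 = set0 -> Z `<=` A1 `|` A2 -> A1 x -> Z `<=` A1.
Proof.
move=> cA1 cA2 A12 ZA A1x.
have [U [oU A1U clUA2]] := closed_open_separation hT cT cA1 cA2 A12.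
pose W := ~` closure U.
have UW z : U z -> ~ W z by move=> Uz; apply; exact: subset_closure.
have A2W : A2 `<=` W.
  by move=> z A2z Uz; have : (closure U `&` A2) z by []; rewrite clUA2.
(* By compactness, finitely many clopen neighbourhoods of [x] already
   squeeze into [U `|` W], the union of two disjoint open sets. *)
have cUW : compact (~` (U `|` W)).
  apply: (subclosed_compact _ cT) => //; apply: open_closedC.
  exact/openU/closed_openC/closed_closure.
move: cUW; rewrite compact_cover => /(_ _ [set C | clopen C /\ C x] setC).
case=> [C [[_ cC] _]|k nUWk|D Dclopen UWD]; first exact: closed_openC.
  apply: contrapT => nk; apply: nUWk.
  have Zk : Z k by move=> C Cx; apply: contrapT => nCk; apply: nk; exists C.
  by case: (ZA k Zk) => [/A1U|/A2W]; [left|right].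
pose C := \bigcap_(E in [set` D]) E.
have clC : clopen C.
  apply: bigcap_fset_ind; [exact: clopenT|exact: clopenI|].
  by move=> E /Dclopen/set_mem [].
have Cx : C x by move=> E /Dclopen/set_mem [].
have CUW : C `<=` U `|` W.
  move=> z Cz; apply: contrapT => nz.
  by have [E DE nEz] := UWD z nz; apply: nEz; exact: Cz.
have clCU : clopen (C `&` U).
  split; first by apply: openI => //; case: clC.
  suff -> : C `&` U = C `&` closure U.
    by apply: closedI; [case: clC|exact: closed_closure].
  apply/seteqP; split => z [Cz Uz]; split => //; first exact: subset_closure.
  by case: (CUW z Cz) => // Wz; exfalso; exact: Wz Uz.
move=> z Zz; case: (ZA z Zz) => // A2z.
have [_ Uz] := Zz _ (conj clCU (conj Cx (A1U x A1x))).
by case: (UW z Uz); exact: A2W.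
Qed.

Lemma connected_quasi_component : connected Z.
Proof.
move=> B [b Bb] [O oO BO] [F cF BF].
have ZFO : Z `<=` (Z `&` F) `|` (Z `&` ~` O).
  move=> z Zz; have [Oz|nOz] := pselect (O z); last by right.
  have : B z by rewrite BO.
  by rewrite BF; left.
have FO : (Z `&` F) `&` (Z `&` ~` O) = set0.
  apply/seteqP; split => // z [[Zz Fz] [_ nOz]]; apply: nOz.
  have : B z by rewrite BF.
  by rewrite BO => -[].
have cZF : closed (Z `&` F) by exact: closedI closed_quasi_component cF.
have cZO : closed (Z `&` ~` O).
  exact: closedI closed_quasi_component (open_closedC oO).
have [Bx|nBx] := pselect (B x).
  apply/seteqP; split; first by rewrite BF => z [].
  by move: Bx; rewrite BF => /(quasi_component_sub cZF cZO FO ZFO).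
have Zx := quasi_component_refl.
have nOx : (Z `&` ~` O) x by split=> // Ox; apply: nBx; rewrite BO.
have OF : (Z `&` ~` O) `&` (Z `&` F) = set0 by rewrite setIC.
have ZOF : Z `<=` (Z `&` ~` O) `|` (Z `&` F) by rewrite setUC.
have ZO := quasi_component_sub cZO cZF OF ZOF nOx.
by move: Bb; rewrite BO => -[/ZO [_ nOb] Ob].
Qed.

End QuasiComponent.

Lemma compact_totally_disconnected_zero_dimensional (T : ptopologicalType) :
  hausdorff_space T -> compact [set: T] -> totally_disconnected [set: T] ->
  zero_dimensional T.
Proof.
move=> hT cT td x y xy; apply: contrapT => nsep.
have Zy : quasi_component x y.
  by move=> C [cC Cx]; apply: contrapT => nCy; apply: nsep; exists C.
have := connected_component_max (quasi_component_refl (x := x)) (@subsetT _ _)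
  (connected_quasi_component hT cT) Zy.
by rewrite td //= => yx; rewrite yx eqxx in xy.
Qed.

Lemma subgroupX (G : topGroupType) (S : set G) x m :
  is_subgroup S -> S x -> S (x ^+ m).
Proof.
by move=> [S1 SM _] Sx; elim: m => [|m IH]; rewrite ?expg0 ?expgS //; apply: SM.
Qed.

Lemma subgroupI (G : topGroupType) (A B : set G) :
  is_subgroup A -> is_subgroup B -> is_subgroup (A `&` B).
Proof.
move=> [A1 AM AV] [B1 BM BV].
by split=> [|x y [Ax Bx] [Ay By]|x [Ax Bx]]; split; auto.
Qed.

Lemma subgroup_core (G : topGroupType) (S : set G) :
  is_subgroup S -> is_subgroup [set g | forall x, S (g ^ x)].
Proof.
move=> [S1 SM SV]; split=> [x|a b Sa Sb x|a Sa x].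
- by rewrite conj1g.
- by rewrite conjMg; apply: SM.
- by rewrite conjVg; apply: SV.
Qed.

Section TopologicalGroup.
Variable G : topGroupType.
Hypothesis tG : topological_group G.

Lemma nbhs_mul (x y : G) W : nbhs (x * y) W -> exists A B,
  [/\ nbhs x A, nbhs y B & forall a b, A a -> B b -> W (a * b)].
Proof.
move=> /(tG.1 (x, y)) [[A B] /= [hA hB] AB].
by exists A, B; split=> // a b Aa Bb; exact: (AB (a, b)).
Qed.

Lemma nbhs_inv (x : G) W : nbhs x^-1 W -> nbhs x [set a | W a^-1].
Proof. exact: tG.2. Qed.

Lemma nbhs_lmul (a y : G) W : nbhs (a * y) W -> nbhs y [set b | W (a * b)].
Proof.
move=> /nbhs_mul [A [B [hA hB AB]]]; apply: filterS hB => b Bb.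
exact: AB (nbhs_singleton hA) Bb.
Qed.

Lemma open_lmul (a : G) U : open U -> open [set b | U (a * b)].
Proof.
by rewrite !openE => oU y Uy; apply: nbhs_lmul; exact: oU.
Qed.

Lemma nbhs_conj (k g : G) W : nbhs (g ^ k) W -> exists A B,
  [/\ nbhs k A, nbhs g B & forall a b, A a -> B b -> W (b ^ a)].
Proof.
move=> /nbhs_mul [A1 [A2 [h1 /nbhs_mul [B [A3 [hB h3 BA3]]] A12]]].
exists ([set a | A1 a^-1] `&` A3), B; split => //.
  by apply: filterI => //; exact: nbhs_inv.
by move=> a b [A1a A3a] Bb; apply: A12 => //; apply: BA3.
Qed.

Lemma continuous_expg m : continuous (fun z : G => z ^+ m).
Proof.
elim: m => [|m IH] x; first exact: cst_continuous.
move=> W /=; rewrite expgS => /nbhs_mul [A [B [hA hB AB]]].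
apply: filterS (filterI hA (IH x B hB)) => z [Az Bz].
by rewrite /= expgS; exact: AB.
Qed.

Lemma subgroup_open (S V : set G) :
  is_subgroup S -> nbhs 1 V -> V `<=` S -> open S.
Proof.
move=> [_ SM SV] hV VS; rewrite openE => h Sh.
have : nbhs (h^-1 * h) V by rewrite mulVg.
move/nbhs_lmul; apply: filterS => y /VS /(SM _ _ Sh).
by rewrite mulKVg.
Qed.

Lemma closure_subgroup (S : set G) : is_subgroup S -> is_subgroup (closure S).
Proof.
move=> [S1 SM SV]; split; first exact: subset_closure.
  move=> x y clx cly B /nbhs_mul [A1 [B1 [h1 h2 AB]]].
  have [a [Sa A1a]] := clx A1 h1; have [b [Sb B1b]] := cly B1 h2.
  by exists (a * b); split; [apply: SM | apply: AB].
move=> x clx B /nbhs_inv hB; have [a [Sa Ba]] := clx _ hB.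
by exists a^-1; split => //; apply: SV.
Qed.

Hypothesis cG : compact [set: G].

(* [H] is the stabiliser of [C] under right multiplication; the tube lemma
   makes it open, and, applied to conjugation on the compact [G], makes its
   core [N] open too. *)
Lemma open_normal_subgroup_sub (C : set G) : clopen C -> C 1 ->
  exists N, [/\ is_subgroup N, open N, normal_in N [set: G] & N `<=` C].
Proof.
move=> [oC cC] C1.
pose H := [set g | forall c, C c -> C (c * g) /\ C (c * g^-1)].
have sgH : is_subgroup H.
  split.
  - by move=> c Cc; rewrite invg1 mulg1.
  - move=> x y Hx Hy c Cc; have [Cx _] := Hx c Cc; split.
      by rewrite mulgA; exact: (Hy _ Cx).1.
    by rewrite invgM mulgA; apply: (Hx _ (Hy c Cc).2).2.
  - by move=> x Hx c Cc; rewrite invgK; have [] := Hx c Cc.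
have [V hV CV] : exists2 V, nbhs 1 V & forall c v, C c -> V v -> C (c * v).
  apply: (compact_tube (X := pointed_group G)) => //.
  - exact: subclosed_compact cC cG _.
  - by move=> c Cc; rewrite mulg1.
  - by move=> c _ W; exact: nbhs_mul.
have VH : V `&` [set v | V v^-1] `<=` H.
  by move=> v [Vv Vv'] c Cc; split; apply: CV.
have oH : open H.
  apply: subgroup_open sgH _ VH; apply: filterI => //.
  by apply: nbhs_inv; rewrite invg1.
pose N := [set g | forall x, H (g ^ x)].
have sgN : is_subgroup N := subgroup_core sgH.
exists N; split => //.
- have [B hB BH] : exists2 B, nbhs 1 B & forall k b, setT k -> B b -> H (b ^ k).
    apply: (compact_tube (X := pointed_group G)) => //.
    + by move=> k _; rewrite conj1g; case: sgH.
    + by move=> k _ W; exact: nbhs_conj.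
  by apply: subgroup_open sgN hB _ => b Bb x; exact: BH.
- by move=> x n _ Nn y; rewrite -mulgA -conjgE -conjgM.
- by move=> g /(_ 1) /(_ 1 C1) []; rewrite conjg1 mul1g.
Qed.

End TopologicalGroup.

Lemma profinite_open_normal_sub (G : topGroupType) (W : set G) :
  profinite G -> nbhs 1 W ->
  exists N, [/\ is_subgroup N, open N, normal_in N [set: G] & N `<=` W].
Proof.
move=> [tG hG cG tdG] hW.
have zdG : zero_dimensional (pointed_group G).
  exact: compact_totally_disconnected_zero_dimensional.
have [D [D1 clD] DW] := zero_dimensional_cvg hG zdG cG hW.
have [N [sgN oN nN ND]] := open_normal_subgroup_sub tG cG clD D1.
by exists N; split => // z /ND /DW.
Qed.

Lemma seq_coset_transversal (G : topGroupType) (Q N : set G) (t : seq G) :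
  is_subgroup N -> (forall x, x \in t -> Q x) ->
  exists s : seq G, [/\ forall i, (i < size s)%N -> Q (nth 1 s i),
    forall x, x \in t -> exists2 i, (i < size s)%N & N ((nth 1 s i)^-1 * x)
  & forall i j, (i < size s)%N -> (j < size s)%N ->
      N ((nth 1 s i)^-1 * nth 1 s j) -> i = j].
Proof.
move=> [N1 NM NV]; elim: t => [|a t IH] tQ.
  by exists [::]; split => // x; rewrite in_nil.
have [|s [sQ tN sN]] := IH; first by move=> x xt; apply: tQ; rewrite inE xt orbT.
have Qa : Q a by apply: tQ; rewrite inE eqxx.
have [[i ilt Ni]|aN] :=
  pselect (exists2 i, (i < size s)%N & N ((nth 1 s i)^-1 * a)).
  by exists s; split => // x; rewrite inE => /predU1P[->|/tN]; first exists i.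
exists (a :: s); split.
- by case=> [|i] //= /sQ.
- move=> x; rewrite inE => /predU1P[->|/tN [i ilt Ni]]; last by exists i.+1.
  by exists 0%N => //=; rewrite mulVg.
- case=> [|i] [|j] //= ilt jlt.
  + by move=> /NV; rewrite invgM invgK => Nj; case: aN; exists j.
  + by move=> Ni; case: aN; exists i.
  + by move=> /(sN i j ilt jlt) ->.
Qed.

Lemma open_subgroup_finite_index (G : topGroupType) (Q N : set G) :
  topological_group G -> compact [set: G] -> closed Q -> is_subgroup Q ->
  is_subgroup N -> rel_open Q N -> exists k, index_eq Q N k.
Proof.
move=> tG cG cQ [_ QM QV] sgN [U [oU NQU]].
have U1 : U 1 by have [N1 _ _] := sgN; move: N1; rewrite NQU => -[].
have : compact (Q : set (pointed_group G)) by exact: subclosed_compact cQ cG _.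
rewrite compact_cover => /(_ _ Q (fun x => [set y | U (x^-1 * y)])).
case=> [x _|x Qx|D DQ QD]; first exact: open_lmul.
  by exists x => //=; rewrite mulVg.
have [|s [sQ DN sN]] := seq_coset_transversal (Q := Q) (t := enum_fset D) sgN.
  by move=> x /DQ/set_mem.
exists (size s), s; split => // z Qz.
have [x Dx Uxz] := QD z Qz.
have Nxz : N (x^-1 * z).
  by rewrite NQU; split => //; apply: QM => //; apply/QV/set_mem/DQ.
have [i ilt Ni] := DN x Dx; exists i => //.
by have [_ NM _] := sgN; have := NM _ _ Ni Nxz; rewrite mulgA mulgK.
Qed.

(* The finite quotient [Q / N] of index [n.+1], with coset representatives
   [s], is realised as the image of the permutation action of [Q] on the left
   cosets of [N], so that finite group theory applies to it. *)
Section CosetAction.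
Variables (G : topGroupType) (Q N : set G) (n : nat) (s : seq G).
Hypotheses (sgQ : is_subgroup Q) (sgN : is_subgroup N) (nNQ : normal_in N Q).
Hypotheses (Qs : forall i, (i < n.+1)%N -> Q (nth 1 s i))
  (Qcover : forall x, Q x -> exists2 i, (i < n.+1)%N & N ((nth 1 s i)^-1 * x))
  (s_uniq : forall i j, (i < n.+1)%N -> (j < n.+1)%N ->
     N ((nth 1 s i)^-1 * nth 1 s j) -> i = j).

Let Q1 : Q 1. Proof. by case: sgQ. Qed.
Let QM x y : Q x -> Q y -> Q (x * y). Proof. by case: sgQ => _ + _; apply. Qed.
Let QV x : Q x -> Q x^-1. Proof. by case: sgQ => _ _; apply. Qed.
Let N1 : N 1. Proof. by case: sgN. Qed.
Let NM x y : N x -> N y -> N (x * y). Proof. by case: sgN => _ + _; apply. Qed.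
Let NV x : N x -> N x^-1. Proof. by case: sgN => _ _; apply. Qed.

Let rep (i : 'I_n.+1) := nth 1 s i.
Let Qrep i : Q (rep i). Proof. exact: Qs (ltn_ord i). Qed.
Let QVrep x i : Q x -> Q (x^-1 * rep i). Proof. by move=> Qx; apply/QM/Qrep/QV. Qed.

Definition coset_index (z : G) : 'I_n.+1 :=
  odflt ord0 [pick i : 'I_n.+1 | `[< N ((nth 1 s i)^-1 * z) >]].

Lemma coset_indexP z : Q z -> N ((rep (coset_index z))^-1 * z).
Proof.
move=> Qz; rewrite /coset_index; case: pickP => [i /asboolP //|].
have [i ilt Ni] := Qcover Qz => /(_ (Ordinal ilt)).
by move/asboolP: Ni => ->.
Qed.

Lemma rep_inj i j : N ((rep i)^-1 * rep j) -> i = j.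
Proof.
by move=> Nij; apply: val_inj; exact: s_uniq (ltn_ord i) (ltn_ord j) Nij.
Qed.

Lemma coset_index_eq z i : Q z -> N ((rep i)^-1 * z) -> coset_index z = i.
Proof.
move=> Qz Ni; apply: rep_inj; have := NM (coset_indexP Qz) (NV Ni).
by rewrite invgM invgK mulgA mulgK.
Qed.

Lemma coset_act_inj x : Q x -> injective (fun i => coset_index (x^-1 * rep i)).
Proof.
move=> Qx i j /= eij; apply: rep_inj.
have := NM (NV (coset_indexP (QVrep i Qx))) (coset_indexP (QVrep j Qx)).
by rewrite eij invgM invgK !mulgA mulgK invgM invgK mulgK.
Qed.

Definition coset_perm (x : G) : {perm 'I_n.+1} :=
  if pselect (Q x) is left Qx then perm (coset_act_inj Qx) else 1.

Lemma coset_permE x i : Q x -> coset_perm x i = coset_index (x^-1 * rep i).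
Proof. by rewrite /coset_perm; case: pselect => // Qx _; rewrite permE. Qed.

Lemma coset_permM x y :
  Q x -> Q y -> coset_perm (x * y) = coset_perm x * coset_perm y.
Proof.
move=> Qx Qy; apply/permP => i; rewrite permM !coset_permE //; last exact: QM.
set j := coset_index (x^-1 * rep i).
apply: coset_index_eq.
  by rewrite invgM -mulgA; apply/QM/QVrep => //; exact: QV.
have := NM (coset_indexP (QVrep j Qy)) (coset_indexP (QVrep i Qx)).
by rewrite invgM !mulgA mulgK.
Qed.

Let i1 := coset_index 1.
Let N_rep_i1 : N (rep i1).
Proof. by have := NV (coset_indexP Q1); rewrite mulg1 invgK. Qed.

Lemma coset_perm_eq1 x : Q x -> (coset_perm x = 1 <-> N x).
Proof.
move=> Qx; split => [x1|Nx].
  have := coset_indexP (QVrep i1 Qx); rewrite -coset_permE // x1 perm1 => Nx'.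
  have := nNQ (QV (Qrep i1)) Nx'; rewrite invgK !mulgA mulgV mul1g mulgK.
  by move/NV; rewrite invgK.
apply/permP => i; rewrite coset_permE // perm1.
by apply: coset_index_eq; [exact: QVrep|rewrite mulgA; apply: nNQ (Qrep i) (NV Nx)].
Qed.

Lemma coset_permX x m : Q x -> coset_perm (x ^+ m) = coset_perm x ^+ m.
Proof.
move=> Qx; elim: m => [|m IH]; first by rewrite !expg0; apply/(coset_perm_eq1 Q1).
by rewrite !expgS coset_permM ?IH //; exact: subgroupX.
Qed.

Definition coset_perms : {set {perm 'I_n.+1}} :=
  [set coset_perm (rep j)^-1 | j : 'I_n.+1].

Lemma coset_perm_in x : Q x -> coset_perm x \in coset_perms.
Proof.
move=> Qx; set j := coset_perm x i1.
have Nj : N ((rep j)^-1 * x^-1).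
  have := NM (coset_indexP (QVrep i1 Qx)) (NV N_rep_i1).
  by rewrite -coset_permE // -mulgA mulgK.
have Nj' : N (x^-1 * (rep j)^-1) by have := nNQ Qx Nj; rewrite -mulgA mulgVK.
apply/imsetP; exists j => //.
have -> : (rep j)^-1 = x * (x^-1 * (rep j)^-1) by rewrite mulKVg.
rewrite coset_permM //; last by apply/QM/QV/Qrep/QV.
by rewrite (proj2 (coset_perm_eq1 _) Nj') ?mulg1 //; apply/QM/QV/Qrep/QV.
Qed.

Lemma coset_permsP g : g \in coset_perms -> exists2 x, Q x & g = coset_perm x.
Proof. by move=> /imsetP [j _ ->]; exists (rep j)^-1 => //; exact/QV/Qrep. Qed.

Lemma group_set_coset_perms : group_set coset_perms.
Proof.
apply/group_setP; split.
  by rewrite -(proj2 (coset_perm_eq1 Q1) N1) coset_perm_in.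
move=> g h /coset_permsP [x Qx ->] /coset_permsP [y Qy ->].
by rewrite -coset_permM // coset_perm_in //; exact: QM.
Qed.

Canonical coset_perm_group := Group group_set_coset_perms.

Lemma card_coset_perm_group : #|coset_perm_group| = n.+1.
Proof.
rewrite card_imset ?card_ord // => j k /(congr1 (fun g : {perm 'I_n.+1} => g i1)).
have rep_i1 l : coset_perm (rep l)^-1 i1 = l.
  rewrite coset_permE; last exact/QV/Qrep.
  by apply: coset_index_eq; rewrite invgK ?mulKg //; apply: QM; exact: Qrep.
by rewrite !rep_i1.
Qed.

Lemma expg_index_sub x : Q x -> N (x ^+ n.+1).
Proof.
move=> Qx; apply/(coset_perm_eq1 (subgroupX _ sgQ Qx)).
rewrite coset_permX //; have := expg_cardG (coset_perm_in Qx).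
by rewrite card_coset_perm_group.
Qed.

(* Bezout gives [n.+1 | 1 + u m], so [(x^u)^-1] is an [m]-th root of [x]
   modulo [N]. *)
Lemma coprime_index_root x m : coprime n.+1 m -> Q x ->
  exists2 y, Q y & N (x^-1 * y ^+ m).
Proof.
move=> cop Qx; have [u _] := Bezoutl m (ltn0Sn n).
rewrite (eqP cop) => /dvdnP [k e1um].
exists (x ^+ u)^-1; first by apply: QV; exact: subgroupX.
have := NV (subgroupX k sgN (expg_index_sub Qx)).
by rewrite -expgnA mulnC -e1um add1n expgSr invgM expVgn -expgnA.
Qed.

Lemma index_p_power p : prime p ->
  (forall x q, Q x -> prime q -> q != p -> exists2 y, Q y & y ^+ q = x) ->
  n.+1 = (p ^ logn p n.+1)%N.
Proof.
move=> p_pr roots; rewrite -p_part part_pnat_id //.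
apply/pnatP => // q q_pr.
rewrite -card_coset_perm_group => /(Cauchy q_pr) [g gP og].
rewrite inE /=; case: (eqVneq q p) => // qp.
have onto : coset_perms \subset (fun h => h ^+ q) @: coset_perms.
  apply/fintype.subsetP => h /coset_permsP [x Qx ->].
  have [y Qy <-] := roots x q Qx q_pr qp.
  by rewrite coset_permX //; apply: imset_f; exact: coset_perm_in.
have /imset_injP qinj : #|(fun h => h ^+ q) @: coset_perms| == #|coset_perms|.
  by rewrite eqn_leq leq_imset_card subset_leq_card.
have g1 : g = 1.
  by apply: qinj gP (group1 coset_perm_group) _; rewrite /= expg1n -og expg_order.
by move: og; rewrite g1 order1 => q1; rewrite -q1 in q_pr.
Qed.

End CosetAction.

Definition p'_divisible (p : nat) (G : topGroupType) (S : set G) : Prop :=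
  is_subgroup S /\
  forall x q, S x -> prime q -> q != p -> exists2 y, S y & y ^+ q = x.

Definition max_p'_divisible (p : nat) (G : topGroupType) (S : set G) : Prop :=
  p'_divisible p S /\ forall T, p'_divisible p T -> S `<=` T -> T = S.

Section ProfiniteGroup.
Variables (p : nat) (G : topGroupType).
Hypotheses (p_pr : prime p) (pfG : profinite G).

Lemma closed_expg_image (S : set G) m : closed S -> closed ((fun z => z ^+ m) @` S).
Proof.
have [tG hG cG _] := pfG => cS; apply: compact_closed hG _.
apply: continuous_compact; last exact: subclosed_compact cS cG _.
by apply: continuous_subspaceT; exact: continuous_expg.
Qed.

Lemma closure_p'_divisible (S : set G) :
  p'_divisible p S -> p'_divisible p (closure S).
Proof.
have [tG _ _ _] := pfG; move=> [sgS rootS]; split; first exact: closure_subgroup.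
move=> x q clx q_pr qp.
apply: (@closed_expg_image (closure S) q (@closed_closure _ S)).
apply: closureS clx => s Ss; have [y Sy <-] := rootS s q Ss q_pr qp.
by exists y => //; exact: subset_closure.
Qed.

Lemma p'_divisible_pro_p (Q : set G) :
  closed Q -> p'_divisible p Q -> pro_p_subgroup p Q.
Proof.
have [tG _ cG _] := pfG; move=> cQ [sgQ rootQ]; split => // N sgN NQ nNQ oN.
have [[|n] [s [size_s Qs Qcover s_uniq]]] :=
  open_subgroup_finite_index tG cG cQ sgQ sgN oN.
  by have [Q1 _ _] := sgQ; have [] := Qcover 1 Q1.
exists (logn p n.+1), s.
by rewrite -(index_p_power sgQ sgN nNQ Qs Qcover s_uniq p_pr rootQ).
Qed.

Lemma pro_p_p'_divisible (Q : set G) : pro_p_subgroup p Q -> p'_divisible p Q.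
Proof.
move=> [sgQ cQ proQ]; split => // x q Qx q_pr qp.
have [tG _ _ _] := pfG; have [_ QM QV] := sgQ.
have : closure ((fun z => z ^+ q) @` Q) x.
  move=> W hW; have : nbhs (x * 1) W by rewrite mulg1.
  move=> /(nbhs_lmul tG) /(profinite_open_normal_sub pfG) [M [sgM oM nM MW]].
  pose N := Q `&` M.
  have nNQ : normal_in N Q.
    move=> y a Qy [Qa Ma]; split; last exact: nM.
    by apply: (QM) => //; apply: (QM) => //; exact: QV.
  have oN : rel_open Q N by exists M.
  have [e [s [_ Qs Qcover s_uniq]]] :=
    proQ N (subgroupI sgQ sgM) (@subIsetl _ Q M) nNQ oN.
  have : coprime (p ^ e) q.
    by rewrite coprimeXl // prime_coprime // dvdn_prime2 // eq_sym.
  have : (0 < p ^ e)%N by rewrite expn_gt0 prime_gt0.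
  case: (p ^ e)%N Qs Qcover s_uniq => [//|n] Qs Qcover s_uniq _ cop.
  have [y Qy [_ /MW]] :=
    coprime_index_root sgQ (subgroupI sgQ sgM) nNQ Qs Qcover s_uniq cop Qx.
  by rewrite /= mulKVg => Wy; exists (y ^+ q); split => //; exists y.
by move/(@closed_expg_image Q q cQ).
Qed.

Lemma p_SylowP (P : set G) : p_Sylow p P <-> max_p'_divisible p P.
Proof.
split=> [[proP Pmax]|[divP Pmax]].
  split=> [|T divT PT]; first exact: pro_p_p'_divisible.
  have clT := closure_p'_divisible divT.
  have proT := p'_divisible_pro_p (@closed_closure _ T) clT.
  have TP := Pmax _ proT (subset_trans PT (@subset_closure _ T)).
  by apply/seteqP; split=> //; rewrite -TP; exact: subset_closure.
have clP : closed P.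
  rewrite -(Pmax _ (closure_p'_divisible divP) (@subset_closure _ P)).
  exact: closed_closure.
split=> [|T proT PT]; first exact: p'_divisible_pro_p.
exact: Pmax (pro_p_p'_divisible proT) PT.
Qed.

End ProfiniteGroup.

Section GroupMorphism.
Variables (G H : topGroupType) (f : G -> H).
Hypothesis fM : {morph f : x y / x * y}.

Let f1 : f 1 = 1.
Proof. by apply: (@mulgI _ (f 1)); rewrite -fM !mulg1. Qed.

HB.instance Definition _ := isMultiplicative.Build G H f fM.
HB.instance Definition _ := Multiplicative_isUMagmaMorphism.Build G H f f1.

Lemma image_p'_divisible p (S : set G) :
  p'_divisible p S -> p'_divisible p (f @` S).
Proof.
move=> [[S1 SM SV] rootS]; split.
  split; first by exists 1.
    by move=> _ _ [a Sa <-] [b Sb <-]; exists (a * b); [apply: SM | rewrite gmulfM].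
  by move=> _ [a Sa <-]; exists a^-1; [apply: SV | rewrite gmulfV].
move=> _ q [a Sa <-] q_pr qp; have [y Sy <-] := rootS a q Sa q_pr qp.
by exists (f y); [exists y | rewrite gmulfXn].
Qed.

End GroupMorphism.

Lemma image_max_p'_divisible p (G H : topGroupType) (f : G -> H) (S : set G) :
  {morph f : x y / x * y} -> bijective f ->
  max_p'_divisible p S -> max_p'_divisible p (f @` S).
Proof.
move=> fM [g fK gK] [divS Smax].
split=> [|T divT ST]; first exact: image_p'_divisible.
have gM : {morph g : x y / x * y}.
  by move=> x y; apply: (canLR fK); rewrite fM !gK.
have TS : g @` T = S.
  apply: Smax (image_p'_divisible gM divT) _.
  by move=> x Sx; exists (f x); [apply: ST; exists x | exact: fK].
apply/seteqP; split => [y Ty|_ /ST //]; rewrite -TS.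
by exists (g y); [exists y | exact: gK].
Qed.

Unset Implicit Arguments.

Theorem mainTheorem14 (p : nat) (G H : topGroupType) (phi : G -> H) :
  prime p -> profinite G -> profinite H ->
  bijective phi -> {morph phi : x y / x * y} ->
  forall P : set G, p_Sylow p P -> p_Sylow p (phi @` P).
Proof.
move=> p_pr pfG pfH phi_bij phiM P /(p_SylowP p_pr pfG) maxP.
by apply/(p_SylowP p_pr pfH); exact: image_max_p'_divisible.
Qed.
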